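(* Let $(G,k,M^*,M)$ be a critical tuple and fix an edge $e\in E^+(C^+)$. If $e\notin r_b(C_e)$, then there exists a set $\mathcal{Q}$ of forward jumps of $C_e$ such that $C^+=\bigcup_{Q\in\mathcal{Q}} r(Q)\cup\bigcup_{P\in\mathcal{I}_e}P$ and no $Q\in\mathcal{Q}$ satisfies $e\in r(Q)$.
   Context: $R(H)$ is the set of red edges of an edge set $H$. For a perfect matching $M$ of a red/blue edge-colored bipartite graph $G=(A\sqcup B,E)$, $G_M$ is the directed graph on $A\sqcup B$ with edges of $M$ oriented from $A$ to $B$ and other edges from $B$ to $A$, weighted by $w_M(e)=0$ for blue $e$, $-1$ for red $e\in M$, $+1$ for red $e\notin M$; $E^+(H)$ (resp. $E^-(H)$) is the set of red edges of $H$ not in $M$ (resp. in $M$), $w_M(H)=|E^+(H)|-|E^-(H)|$. Paths and cycles are directed and identified with edge sets. For an edge $e$, $M^e$ is a perfect matching containing $e$ with the minimum number of red edges among those containing $e$. A tuple $(G,k,M^*,M)$ is critical if: every edge of $G$ lies in some perfect matching; $|R(M^* )|=k$; $|R(M)|<\frac13k$; every directed cycle $C$ of $G_M$ with $w_M(C)>0$ has $|E^+(C)|>\frac23k$; and $|R(M^e)|<\frac13k$ for every red $e\in M^*\setminus M$. $C^+$ is the unique positive-weight directed cycle of $G_M$ contained in $M\Delta M^*$. For $e\in E^+(C^+)$, $C_e$ is the unique directed cycle of $G_M$ in $M\Delta M^e$ containing $e$. A jump of $C_e$ is a sub-path $Q$ of $C_e$ with endpoints on $C^+$, no inner vertex on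 $C^+$ and $Q\cap C^+=\emptyset$; interjumps are the sub-paths of $C_e$ contained in $C^+$ between consecutive jumps, and $\mathcal{I}_e$ is the set of interjumps of $C_e$. For a jump $Q$, $C_Q$ is the unique directed cycle in $C^+\cup Q$ containing $Q$; $Q$ is forward if $w_M(C_Q)>0$, backward otherwise; reach $r(Q)=C^+\setminus C_Q$ if forward, $r(Q)=C_Q\setminus Q$ if backward. $r_b(C_e)$ is the union of the reaches of all backward jumps of $C_e$. *)

From mathcomp Require Import all_boot all_order all_algebra.
From Stdlib Require Import ClassicalEpsilon.
Set Implicit Arguments. Unset Strict Implicit. Unset Printing Implicit Defensive.
Import GRing.Theory Num.Theory.

Section Defs.
Variables (A B : finType).

(* An edge is a pair (a,b) in A * B; the graph is the edge set E; the red
   edges are the set R (edges of E not in R are blue). *)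
Notation edge := (A * B)%type.
Notation vertex := (A + B)%type.

Definition is_pm (E M : {set edge}) : Prop :=
  M \subset E /\
  (forall a : A, #|[set b : B | (a, b) \in M]| = 1%N) /\
  (forall b : B, #|[set a : A | (a, b) \in M]| = 1%N).

Definition red_of (R H : {set edge}) : {set edge} := H :&: R.

(* orientation in G_M: M-edges from A to B, other edges from B to A *)
Definition tl (M : {set edge}) (x : edge) : vertex :=
  if x \in M then inl x.1 else inr x.2.
Definition hd (M : {set edge}) (x : edge) : vertex :=
  if x \in M then inr x.2 else inl x.1.

Definition Eplus (R M H : {set edge}) : {set edge} := [set x in H | (x \in R) && (x \notin M)].
Definition Eminus (R M H : {set edge}) : {set edge} := [set x in H | (x \in R) && (x \in M)].
Definition wM (R M H : {set edge}) : int := (#|Eplus R M H|%:Z - #|Eminus R M H|%:Z)%R.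

Definition step (M : {set edge}) (x y : edge) : bool := hd M x == tl M y.

(* directed cycle of G_M, identified with its edge set *)
Definition is_dcycle (E M C : {set edge}) : Prop :=
  exists s : seq edge, s != [::] /\ C = [set x in s] /\ all (fun x => x \in E) s /\
    cycle (step M) s /\ uniq (map (hd M) s).

Definition dpath_seq (E M : {set edge}) (u : vertex) (s : seq edge) (v : vertex) : Prop :=
  exists x s', s = x :: s' /\ all (fun y => y \in E) s /\ path (step M) x s' /\
    tl M x = u /\ hd M (last x s') = v /\ uniq (u :: map (hd M) s).

Definition inner (M : {set edge}) (s : seq edge) : seq vertex :=
  map (hd M) (take (size s).-1 s).

Definition is_dpath (E M P : {set edge}) (u v : vertex) : Prop :=
  exists s, dpath_seq E M u s v /\ P = [set x in s].

Definition Vof (H : {set edge}) : {set vertex} :=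
  [set inl x.1 | x in H] :|: [set inr x.2 | x in H].

Definition subpath (E M C P : {set edge}) : Prop :=
  P \subset C /\ exists u v, is_dpath E M P u v.

Definition is_jump (E M Cp Ce Q : {set edge}) : Prop :=
  Q \subset Ce /\
  exists u s v, dpath_seq E M u s v /\ Q = [set x in s] /\
    u \in Vof Cp /\ v \in Vof Cp /\ all (fun y => y \notin Vof Cp) (inner M s) /\
    [disjoint Q & Cp].

(* C_Q : the unique directed cycle in C^+ \cup Q containing Q *)
Definition CQ (E M Cp Q : {set edge}) : {set edge} :=
  epsilon (inhabits set0)
    (fun D => is_dcycle E M D /\ Q \subset D /\ D \subset Cp :|: Q).

Definition forward (E R M Cp Q : {set edge}) : Prop := (0 < wM R M (CQ E M Cp Q))%R.

Definition reach (E R M Cp Q : {set edge}) : {set edge} :=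
  if (0 < wM R M (CQ E M Cp Q))%R then Cp :\: CQ E M Cp Q
  else CQ E M Cp Q :\: Q.

(* interjumps of Ce: the maximal sub-paths of Ce contained in Cp
   (= the parts of Ce in Cp between consecutive jumps); if Ce has no
   jump, i.e. Ce is contained in Cp, the single interjump is Ce itself. *)
Definition is_interjump (E M Cp Ce P : {set edge}) : Prop :=
  if Ce \subset Cp then P = Ce
  else subpath E M Ce P /\ P \subset Cp /\
       (forall P', subpath E M Ce P' -> P' \subset Cp -> P \subset P' -> P' = P).

(* critical tuple (G,k,M*,M); Me x is the chosen M^x *)
Definition critical (E R : {set edge}) (k : nat) (Ms M : {set edge})
    (Me : edge -> {set edge}) : Prop :=
  (forall x, x \in E -> exists M', is_pm E M' /\ x \in M') /\
  is_pm E Ms /\ is_pm E M /\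
  #|red_of R Ms| = k /\
  (3 * #|red_of R M| < k)%N /\
  (forall C, is_dcycle E M C -> (0 < wM R M C)%R -> (2 * k < 3 * #|Eplus R M C|)%N) /\
  (forall x, x \in R -> x \in Ms :\: M -> (3 * #|red_of R (Me x)| < k)%N).

Definition is_Me (E R : {set edge}) (Me : edge -> {set edge}) : Prop :=
  forall x, x \in E -> is_pm E (Me x) /\ x \in Me x /\
    (forall M', is_pm E M' -> x \in M' -> (#|red_of R (Me x)| <= #|red_of R M'|)%N).

Definition symdiff (X Y : {set edge}) : {set edge} := (X :\: Y) :|: (Y :\: X).

End Defs.

From mathcomp Require Import all_boot all_order all_algebra.
From Stdlib Require Import ClassicalEpsilon.
From mathcomp Require Import zify.
Import Order.TTheory GRing.Theory Num.Theory.
Set Implicit Arguments. Unset Strict Implicit. Unset Printing Implicit Defensive.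

(* Give every edge x of C^+ the weight
     [x \in C_e] + #{forward jumps Q | x \notin C_Q} - #{backward jumps Q | x \in C_Q}.
   The jumps partition C_e \ C^+, and the directed cycles C_e and C_Q enter every
   vertex as often as they leave it; comparing these balances at the vertex shared by
   two consecutive edges of C^+ shows that the weight is constant along C^+.  No
   backward jump contributes negatively at e, so an edge x of C^+ off C_e gets a larger
   contribution than e from some forward jump Q, which forces x \notin C_Q and
   e \in C_Q, i.e. x \in r(Q) and e \notin r(Q).  The edges of C^+ on C_e lie in
   interjumps. *)

Definition asbool (P : Prop) : bool := excluded_middle_informative P.

Lemma asboolP (P : Prop) : reflect P (asbool P).
Proof. exact: sumboolP. Qed.

Definition ind (b : bool) : int := if b then 1 else 0.

Lemma ind_ge0 b : (0 <= ind b)%R.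
Proof. by case: b. Qed.

Lemma ind_negb b : ind (~~ b) = (1 - ind b)%R.
Proof. by case: b. Qed.

Lemma sum_ind_unique (T : finType) (H : {set T}) (P : pred T) x :
  (forall y, y \in H -> P y -> y = x) -> P x ->
  (\sum_(y in H) ind (P y) = ind (x \in H))%R.
Proof.
move=> P_uniq Px; case: (boolP (x \in H)) => xH.
  rewrite (bigD1 x) //= Px big1 ?addr0 // => y /andP[yH y_neq].
  by case: (boolP (P y)) => // /(P_uniq y yH) y_eq; rewrite y_eq eqxx in y_neq.
by rewrite big1 // => y yH; case: (boolP (P y)) => // /(P_uniq y yH) y_eq; rewrite -y_eq yH in xH.
Qed.

Lemma ltn_interval_ind (P : nat -> Prop) l i : i < l -> P i ->
  (forall k, k.+1 < l -> P k -> P k.+1) ->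
  (forall k, k.+1 < l -> P k.+1 -> P k) -> forall k, k < l -> P k.
Proof.
move=> il Pi Pup Pdown k kl; case: (leqP i k) => ik.
  have up d : i + d < l -> P (i + d).
    elim: d => [|d IH] idl; first by rewrite addn0.
    by rewrite addnS; apply: Pup; [rewrite -addnS | apply: IH; apply: ltnW; rewrite -addnS].
  by rewrite -(subnKC ik); apply: up; rewrite subnKC.
have down d : d <= i -> P (i - d).
  elim: d => [|d IH] di; first by rewrite subn0.
  apply: Pdown; rewrite subnSK //; last by apply: IH; apply: ltnW.
  exact: leq_ltn_trans (leq_subr _ _) il.
by rewrite -(subKn (ltnW ik)); apply: down; apply: leq_subr.
Qed.

Lemma exists_bracket (P : pred nat) n i : P 0 -> P n -> 0 < i <= n ->
  exists a b, [/\ a < i <= b, b <= n, P a, P b & forall j, a < j -> j < b -> ~~ P j].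
Proof.
move=> P0 Pn /andP[i_gt0 i_le].
have exPa : exists j, (j < i) && P j by exists 0; rewrite i_gt0 P0.
have exPb : exists j, (i <= j) && P j by exists n; rewrite i_le Pn.
have ubPa j : (j < i) && P j -> j <= i by case/andP => /ltnW.
case: (ex_maxnP exPa ubPa) => a /andP[a_lt Pa] a_max.
case: (ex_minnP exPb) => b /andP[i_le_b Pb] b_min.
exists a, b; split=> //; first by rewrite a_lt.
  by apply: b_min; rewrite i_le Pn.
move=> j aj jb; apply/negP => Pj; case: (ltnP j i) => ji.
  by have := a_max j; rewrite ji Pj leqNgt aj => /(_ isT).
by have := b_min j; rewrite ji Pj leqNgt jb => /(_ isT).
Qed.

Section Orientation.
Variables (A B : finType) (M : {set A * B}).

Definition in_deg (H : {set A * B}) (w : A + B) : int := \sum_(y in H) ind (hd M y == w).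
Definition out_deg (H : {set A * B}) (w : A + B) : int := \sum_(y in H) ind (tl M y == w).

Lemma in_deg_setID H K w : in_deg H w = (in_deg (H :&: K) w + in_deg (H :\: K) w)%R.
Proof. exact: big_setID. Qed.

Lemma out_deg_setID H K w : out_deg H w = (out_deg (H :&: K) w + out_deg (H :\: K) w)%R.
Proof. exact: big_setID. Qed.

Lemma in_deg_cover (P : {set {set A * B}}) w :
  trivIset P -> in_deg (cover P) w = (\sum_(H in P) in_deg H w)%R.
Proof. exact: big_trivIset. Qed.

Lemma out_deg_cover (P : {set {set A * B}}) w :
  trivIset P -> out_deg (cover P) w = (\sum_(H in P) out_deg H w)%R.
Proof. exact: big_trivIset. Qed.

Lemma tl_neq_hd x : tl M x != hd M x.
Proof. by rewrite /tl /hd; case: ifP. Qed.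

Lemma hd_Vof (H : {set A * B}) x : x \in H -> hd M x \in Vof H.
Proof.
move=> xH; rewrite /hd /Vof !inE.
by case: ifP => _; apply/orP; [right|left]; apply/imsetP; exists x.
Qed.

Lemma tl_Vof (H : {set A * B}) x : x \in H -> tl M x \in Vof H.
Proof.
move=> xH; rewrite /tl /Vof !inE.
by case: ifP => _; apply/orP; [left|right]; apply/imsetP; exists x.
Qed.

End Orientation.

Section CycleWalk.
Variables (A B : finType) (M : {set A * B}) (s : seq (A * B)) (x0 : A * B).
Hypotheses (s_cycle : cycle (step M) s) (s_uniq : uniq (map (hd M) s)).
Hypothesis s_gt0 : 0 < size s.
Local Notation m := (size s).

Definition cyc_nth k := nth x0 s (k %% m).
Local Notation cn := cyc_nth.

Lemma cyc_nth_mod k : cn (k %% m) = cn k.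
Proof. by rewrite /cyc_nth modn_mod. Qed.

Lemma cyc_nthDsize k : cn (k + m) = cn k.
Proof. by rewrite /cyc_nth modnDr. Qed.

Lemma cyc_nth_small k : k < m -> cn k = nth x0 s k.
Proof. by move=> km; rewrite /cyc_nth modn_small. Qed.

Lemma mem_cyc_nth k : cn k \in s.
Proof. by rewrite /cyc_nth mem_nth // ltn_pmod. Qed.

Lemma cyc_nthP x : x \in s -> exists2 k, k < m & x = cn k.
Proof.
by move=> xs; exists (index x s); rewrite ?index_mem // cyc_nth_small ?index_mem ?nth_index.
Qed.

Lemma step_cyc_nth k : step M (cn k) (cn k.+1).
Proof.
rewrite -cyc_nth_mod -(cyc_nth_mod k.+1) -addn1 -modnDml addn1.
have := ltn_pmod k s_gt0; set j := k %% m => jm.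
move: s_cycle; rewrite (cycle_path x0) => /(pathP x0) s_path.
case: (ltnP j.+1 m) => j1m.
  by rewrite modn_small // !cyc_nth_small //; exact: (s_path j.+1).
have j1_eq : j.+1 = m by apply: anti_leq; rewrite jm j1m.
have -> : j = m.-1 by rewrite -j1_eq.
by rewrite prednK // modnn !cyc_nth_small ?prednK // nth_last; exact: (s_path 0).
Qed.

Lemma tl_cyc_nthS k : tl M (cn k.+1) = hd M (cn k).
Proof. by have /eqP -> := step_cyc_nth k. Qed.

Lemma tl_cyc_nth k : tl M (cn k) = hd M (cn (k + m.-1)).
Proof. by rewrite -tl_cyc_nthS -addnS prednK // cyc_nthDsize. Qed.

Lemma hd_cyc_nth_inj i j : hd M (cn i) = hd M (cn j) -> i = j %[mod m].
Proof.
move=> hd_eq; apply/eqP; rewrite -(nth_uniq (hd M x0) _ _ s_uniq) ?size_map ?ltn_pmod //.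
by rewrite !(nth_map x0) ?ltn_pmod // -/(cn i) -/(cn j) hd_eq.
Qed.

Lemma tl_cyc_nth_inj i j : tl M (cn i) = tl M (cn j) -> i = j %[mod m].
Proof. by rewrite !tl_cyc_nth => /hd_cyc_nth_inj /eqP; rewrite eqn_modDr => /eqP. Qed.

Lemma cycle_hd_inj : {in s &, injective (hd M)}.
Proof.
move=> x y /cyc_nthP[i _ ->] /cyc_nthP[j _ ->] /hd_cyc_nth_inj ij.
by rewrite -cyc_nth_mod ij cyc_nth_mod.
Qed.

Lemma cycle_tl_inj : {in s &, injective (tl M)}.
Proof.
move=> x y /cyc_nthP[i _ ->] /cyc_nthP[j _ ->] /tl_cyc_nth_inj ij.
by rewrite -cyc_nth_mod ij cyc_nth_mod.
Qed.

Lemma cycle_step_closed (X : pred (A * B)) y :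
  y \in s -> X y -> (forall y z, y \in s -> z \in s -> X y -> step M y z -> X z) ->
  forall z, z \in s -> X z.
Proof.
move=> /cyc_nthP[i im ->] Xi X_step.
have X_from_i k : X (cn (i + k)).
  elim: k => [|k IH]; first by rewrite addn0.
  by rewrite addnS; apply: X_step IH (step_cyc_nth _); apply: mem_cyc_nth.
move=> _ /cyc_nthP[j jm ->]; have := X_from_i (j + m - i).
by rewrite subnKC ?cyc_nthDsize // (leq_trans (ltnW im)) // leq_addl.
Qed.

Lemma cycle_deg_balance w : in_deg M [set x in s] w = out_deg M [set x in s] w.
Proof.
rewrite /in_deg /out_deg.
case: (boolP [exists y in [set x in s], hd M y == w]).
  case/exists_inP=> _ /[!inE] /cyc_nthP[i _ ->] /eqP <-.
  rewrite (@sum_ind_unique _ _ _ (cn i)) ?(@sum_ind_unique _ _ _ (cn i.+1)) ?inE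
    ?mem_cyc_nth ?tl_cyc_nthS //.
  - by move=> y /[!inE] ys /eqP; rewrite -tl_cyc_nthS; apply: cycle_tl_inj; rewrite ?mem_cyc_nth.
  - by move=> y /[!inE] ys /eqP; apply: cycle_hd_inj; rewrite ?mem_cyc_nth.
move=> /exists_inPn no_in; rewrite !big1 // => y; last by move/no_in/negPf ->.
rewrite inE => /cyc_nthP[i _ ->].
have no_pred : (hd M (cn (i + m.-1)) == w) = false.
  by apply/negbTE/no_in; rewrite inE mem_cyc_nth.
by rewrite tl_cyc_nth no_pred.
Qed.

Definition cyc_arc i L := [seq cn (i + k) | k <- iota 0 L].

Lemma size_cyc_arc i L : size (cyc_arc i L) = L.
Proof. by rewrite size_map size_iota. Qed.

Lemma nth_cyc_arc i L k : k < L -> nth x0 (cyc_arc i L) k = cn (i + k).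
Proof. by move=> kL; rewrite (nth_map 0) ?size_iota // nth_iota. Qed.

Lemma cyc_arcP x i L : reflect (exists2 k, k < L & x = cn (i + k)) (x \in cyc_arc i L).
Proof.
apply: (iffP mapP) => [[k] | [k kL ->]]; last by exists k; rewrite ?mem_iota.
by rewrite mem_iota => /andP[_ kL] ->; exists k.
Qed.

Lemma inner_cyc_arc i L :
  inner M (cyc_arc i L) = [seq hd M (cn (i + k)) | k <- iota 0 L.-1].
Proof.
rewrite /inner size_cyc_arc /cyc_arc -map_take take_iota -map_comp.
by congr (map _ (iota 0 _)); apply/minn_idPl; apply: leq_pred.
Qed.

Lemma dpath_cyc_arc (E : {set A * B}) i L : 0 < L -> L < m -> all [in E] s ->
  dpath_seq E M (tl M (cn i)) (cyc_arc i L) (hd M (cn (i + L.-1))).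
Proof.
case: L => // L _ Lm sE.
have arc_cons : cn (i + 0) :: behead (cyc_arc i L.+1) = cyc_arc i L.+1 by [].
exists (cn (i + 0)), (behead (cyc_arc i L.+1)); rewrite arc_cons; split=> //; split.
  by apply/allP => _ /cyc_arcP[k _ ->]; apply: (allP sE); apply: mem_cyc_nth.
split.
  apply/(pathP x0) => j; rewrite size_behead size_cyc_arc => jL.
  rewrite nth_behead -arc_cons -/(nth x0 _ j.+1) arc_cons.
  by rewrite !nth_cyc_arc // ?addnS ?step_cyc_nth // ltnW.
split; first by rewrite addn0.
split; first by rewrite (last_nth x0) arc_cons size_behead size_cyc_arc nth_cyc_arc.
rewrite tl_cyc_nth /cyc_arc -map_comp.
have small k : k \in m.-1 :: iota 0 L.+1 -> k < m.
  rewrite inE mem_iota => /orP[/eqP-> | /andP[_ kL]]; first by rewrite ltn_predL.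
  exact: ltn_trans kL Lm.
have inj : {in m.-1 :: iota 0 L.+1 &, injective (fun k => hd M (cn (i + k)))}.
  move=> k1 k2 k1s k2s /hd_cyc_nth_inj /eqP.
  by rewrite eqn_modDl !modn_small ?small // => /eqP.
rewrite -[hd M _]/((fun k => hd M (cn (i + k))) m.-1) -map_cons (map_inj_in_uniq inj).
rewrite cons_uniq iota_uniq andbT.
by rewrite -/(iota 0 L.+1) mem_iota /= -leqNgt -ltnS prednK.
Qed.

End CycleWalk.

Section DirectedPaths.
Variables (A B : finType) (E M : {set A * B}).

Lemma dpath_seq_nth x0 u qs v : dpath_seq E M u qs v ->
  [/\ 0 < size qs, tl M (nth x0 qs 0) = u, hd M (nth x0 qs (size qs).-1) = v &
      forall k, k.+1 < size qs -> hd M (nth x0 qs k) = tl M (nth x0 qs k.+1)].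
Proof.
case=> x [qs' [-> [_ [qs_path [x_tl [last_hd _]]]]]]; split=> //.
  by rewrite /= -(last_nth x0).
by move=> k k_lt; move/(pathP x0): qs_path => /(_ k k_lt) /eqP.
Qed.

Lemma map_hd_dpath_seq u qs v : dpath_seq E M u qs v -> map (hd M) qs = rcons (inner M qs) v.
Proof.
case=> x [qs' [-> [_ [_ [_ [<- _]]]]]].
rewrite /inner [in LHS]lastI map_rcons; congr rcons => /=.
by rewrite [in take _ _]lastI -cats1 take_size_cat ?size_belast.
Qed.

Lemma hd_nth_inner x0 qs k : k.+1 < size qs -> hd M (nth x0 qs k) \in inner M qs.
Proof.
move=> k_lt; apply/mapP; exists (nth x0 (take (size qs).-1 qs) k).
  by rewrite mem_nth // size_takel ?leq_pred // -ltnS (ltn_predK k_lt).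
by rewrite nth_take // -ltnS (ltn_predK k_lt).
Qed.

Lemma dpath_seq_uniq u qs v : dpath_seq E M u qs v -> uniq (u :: map (hd M) qs).
Proof. by case=> x [qs' [-> [_ [_ [_ [_ ->]]]]]]. Qed.

Lemma dpath_seq_neq u qs v : dpath_seq E M u qs v -> u != v.
Proof.
case=> x [qs' [-> [_ [_ [_ [<- qs_uniq]]]]]]; move: qs_uniq; rewrite cons_uniq => /andP[u_notin _].
by apply: contraNneq u_notin => ->; apply: map_f; apply: mem_last.
Qed.

Lemma dcycle_cat u v p q : dpath_seq E M u p v -> dpath_seq E M v q u ->
  {in map (hd M) p, forall w, w \notin map (hd M) q} -> is_dcycle E M [set x in p ++ q].
Proof.
case=> x [p' [-> [pE [p_path [x_tl [p_hd p_uniq]]]]]].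
case=> y [q' [-> [qE [q_path [y_tl [q_hd q_uniq]]]]]] pq_disj.
exists ((x :: p') ++ y :: q'); split=> //; split=> //; split; first by rewrite all_cat pE qE.
split.
  rewrite /cycle /= rcons_cat cat_path p_path /= rcons_path q_path /step.
  by rewrite p_hd y_tl q_hd x_tl !eqxx.
rewrite map_cat cat_uniq; apply/and3P; split.
- by move: p_uniq; rewrite cons_uniq => /andP[].
- by apply/hasPn => w w_q; apply/negP => /pq_disj; rewrite w_q.
- by move: q_uniq; rewrite cons_uniq => /andP[].
Qed.

End DirectedPaths.

Section Jumps.
Variables (A B : finType) (E M Cp Ce : {set A * B}) (sp se : seq (A * B)) (x0 : A * B).
Hypotheses (Cp_def : Cp = [set x in sp]) (sp_E : all [in E] sp)
  (sp_cycle : cycle (step M) sp) (sp_uniq : uniq (map (hd M) sp)) (sp_gt0 : 0 < size sp).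
Hypotheses (Ce_def : Ce = [set x in se]) (se_E : all [in E] se)
  (se_cycle : cycle (step M) se) (se_uniq : uniq (map (hd M) se)) (se_gt0 : 0 < size se).
Local Notation V := (Vof Cp).
Local Notation cnp := (cyc_nth sp x0).
Local Notation cne := (cyc_nth se x0).

Lemma mem_Cp x : (x \in Cp) = (x \in sp).
Proof. by rewrite Cp_def inE. Qed.

Lemma mem_Ce x : (x \in Ce) = (x \in se).
Proof. by rewrite Ce_def inE. Qed.

Lemma Cp_hd_inj : {in Cp &, injective (hd M)}.
Proof. by move=> x y; rewrite !mem_Cp; apply: cycle_hd_inj. Qed.

Lemma Cp_tl_inj : {in Cp &, injective (tl M)}.
Proof. by move=> x y; rewrite !mem_Cp; apply: (cycle_tl_inj x0). Qed.

Lemma Ce_hd_inj : {in Ce &, injective (hd M)}.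
Proof. by move=> x y; rewrite !mem_Ce; apply: cycle_hd_inj. Qed.

Lemma Ce_tl_inj : {in Ce &, injective (tl M)}.
Proof. by move=> x y; rewrite !mem_Ce; apply: (cycle_tl_inj x0). Qed.

Lemma Vof_cycle_hd w : w \in V -> exists2 x, x \in Cp & hd M x = w.
Proof.
have hd_or_tl x : x \in Cp -> hd M x = w \/ tl M x = w -> exists2 y, y \in Cp & hd M y = w.
  move=> xCp [<-|<-]; first by exists x.
  move: xCp; rewrite mem_Cp => /(cyc_nthP x0)[k _ ->].
  by exists (cnp (k + (size sp).-1)); rewrite ?mem_Cp ?mem_cyc_nth ?tl_cyc_nth.
rewrite /Vof inE => /orP[] /imsetP[x xCp w_eq]; apply: (hd_or_tl x xCp);
  by rewrite w_eq /hd /tl; case: ifP; auto.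
Qed.

Lemma jump_sub Q1 Q2 y : is_jump E M Cp Ce Q1 -> is_jump E M Cp Ce Q2 ->
  y \in Q1 -> y \in Q2 -> Q1 \subset Q2.
Proof.
move=> [Q1Ce [u1 [qs1 [v1 [dp1 [Q1_def [_ [_ [inner1 _]]]]]]]]].
move=> [Q2Ce [u2 [qs2 [v2 [dp2 [Q2_def [u2V [v2V _]]]]]]]].
have [_ _ _ step1] := dpath_seq_nth x0 dp1.
have [_ tl2 hd2 step2] := dpath_seq_nth x0 dp2.
have Ce1 k : k < size qs1 -> nth x0 qs1 k \in Ce.
  by move=> k_lt; apply: (subsetP Q1Ce); rewrite Q1_def inE mem_nth.
have Ce2 k : k < size qs2 -> nth x0 qs2 k \in Ce.
  by move=> k_lt; apply: (subsetP Q2Ce); rewrite Q2_def inE mem_nth.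
have inner1V k : k.+1 < size qs1 -> hd M (nth x0 qs1 k) \notin V.
  by move=> k_lt; apply: (allP inner1); apply: hd_nth_inner.
rewrite Q1_def Q2_def !inE => /(nthP x0)[i i_lt y_eq] y_qs2.
apply/subsetP => _ /[!inE] /(nthP x0)[k k_lt <-]; move: k k_lt.
apply: (@ltn_interval_ind (fun k => nth x0 qs1 k \in qs2) _ i i_lt); first by rewrite y_eq.
  move=> j j_lt /(nthP x0)[l l_lt l_eq].
  have l_lt' : l.+1 < size qs2.
    rewrite ltn_neqAle l_lt andbT; apply: (contraNneq _ (inner1V j j_lt)) => l_last.
    by move: hd2; rewrite -l_eq -l_last /= => ->.
  have -> : nth x0 qs1 j.+1 = nth x0 qs2 l.+1.
    by apply: Ce_tl_inj; rewrite ?Ce1 ?Ce2 // -step1 // -step2 // l_eq.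
  exact: mem_nth.
move=> j j_lt /(nthP x0)[[|l] l_lt l_eq].
  by move: (inner1V j j_lt); rewrite step1 // -l_eq tl2 u2V.
have -> : nth x0 qs1 j = nth x0 qs2 l.
  by apply: Ce_hd_inj; rewrite ?Ce1 ?Ce2 ?(ltnW j_lt) ?(ltnW l_lt) // step1 // step2 // l_eq.
exact: mem_nth (ltnW l_lt).
Qed.

Lemma jump_eq Q1 Q2 y : is_jump E M Cp Ce Q1 -> is_jump E M Cp Ce Q2 ->
  y \in Q1 -> y \in Q2 -> Q1 = Q2.
Proof.
move=> J1 J2 y1 y2; apply/eqP; rewrite eqEsubset.
by rewrite (jump_sub J1 J2 y1 y2) (jump_sub J2 J1 y2 y1).
Qed.

Lemma exists_jump_mem z y : z \in Ce -> z \in Cp -> y \in Ce -> y \notin Cp ->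
  exists2 Q, is_jump E M Cp Ce Q & y \in Q.
Proof.
move=> zCe zCp yCe yCp.
have [pz pz_lt z_eq] : exists2 pz, pz < size se & z = cne pz.
  by move: zCe; rewrite mem_Ce => /(cyc_nthP x0).
have [i i_lt y_eq] : exists2 i, i < size se & y = cne (pz + i).
  move: yCe; rewrite mem_Ce => /(cyc_nthP x0)[k k_lt ->].
  exists ((k + size se - pz) %% size se); first exact: ltn_pmod.
  rewrite -[RHS]cyc_nth_mod modnDmr subnKC ?cyc_nth_mod ?cyc_nthDsize //.
  exact: leq_trans (ltnW pz_lt) (leq_addl _ _).
have i_gt0 : 0 < i by rewrite lt0n; apply: contraNneq yCp => i0; rewrite y_eq i0 addn0 -z_eq.
pose P j := hd M (cne (pz + j)) \in V.
have P0 : P 0 by rewrite /P addn0 -z_eq hd_Vof.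
have Plast : P (size se).-1 by rewrite /P -tl_cyc_nth // -z_eq tl_Vof.
have i_range : 0 < i <= (size se).-1 by rewrite i_gt0 -ltnS prednK.
(* The vertices of V(C^+) nearest to y along C_e on either side bound the jump through y. *)
have [a [b [/andP[a_lt i_le_b] b_le Pa Pb between]]] := exists_bracket P0 Plast i_range.
pose Q := cyc_arc se x0 (pz + a.+1) (b - a).
have Q_dpath : dpath_seq E M (hd M (cne (pz + a))) Q (hd M (cne (pz + b))).
  have L_gt0 : 0 < b - a by move: a_lt i_le_b; clear; lia.
  have L_lt : b - a < size se by move: b_le se_gt0; clear; lia.
  have := dpath_cyc_arc x0 se_cycle se_uniq se_gt0 (pz + a.+1) L_gt0 L_lt se_E.
  have -> : pz + a.+1 + (b - a).-1 = pz + b by move: a_lt i_le_b; clear; lia.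
  by rewrite [in tl _ _]addnS tl_cyc_nthS //; apply.
exists [set x in Q]; last first.
  rewrite inE y_eq; apply/cyc_arcP; exists (i - a.+1); first by move: a_lt i_le_b; clear; lia.
  by rewrite -addnA subnKC.
split.
  by apply/subsetP => _ /[!inE] /cyc_arcP[k _ ->]; rewrite mem_Ce mem_cyc_nth.
exists (hd M (cne (pz + a))), Q, (hd M (cne (pz + b))); do 5 split => //.
  rewrite inner_cyc_arc; apply/allP => w /mapP[k]; rewrite mem_iota => /andP[_ k_lt] ->.
  by rewrite -addnA; apply: between; move: k_lt; clear; lia.
rewrite disjoint_subset; apply/subsetP => x /[!inE] /cyc_arcP[k k_lt ->]; apply/negP => xCp.
(* An edge of C^+ on the arc has both ends in V(C^+), so one of them lies strictly
   between a and b unless the edge is y. *)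
rewrite -addnA in xCp; case: (ltngtP (a.+1 + k) i) => [j_lt | j_gt | j_eq].
- by move: (hd_Vof M xCp); apply/negP; apply: between; move: j_lt i_le_b; clear; lia.
- move: (tl_Vof M xCp); rewrite addSn addnS tl_cyc_nthS //.
  by apply/negP; apply: between; move: j_gt a_lt k_lt; clear; lia.
- by move: yCp; rewrite y_eq -j_eq xCp.
Qed.

Lemma jump_closes_cycle Q : is_jump E M Cp Ce Q ->
  exists D, is_dcycle E M D /\ Q \subset D /\ D \subset Cp :|: Q.
Proof.
move=> [_ [u [qs [v [qs_dpath [Q_def [uV [vV [innerV _]]]]]]]]].
have [xv xvCp xv_hd] := Vof_cycle_hd vV; have [xu xuCp xu_hd] := Vof_cycle_hd uV.
move: xvCp xuCp; rewrite !mem_Cp => /(cyc_nthP x0)[pv pv_lt xv_eq] /(cyc_nthP x0)[pu pu_lt xu_eq].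
have pu_neq : pu != pv.
  apply: (contraNneq _ (dpath_seq_neq qs_dpath)) => pu_eq.
  by rewrite -xu_hd -xv_hd xu_eq xv_eq pu_eq.
have [L [L_gt0 L_lt L_end]] : exists L, [/\ 0 < L, L < size sp & cnp (pv + L) = cnp pu].
  case: (ltngtP pv pu) pu_neq => [pv_pu | pu_pv | <-] // _.
    by exists (pu - pv); rewrite subnKC ?(ltnW pv_pu) //; split=> //; move: pv_pu pu_lt; clear; lia.
  exists (pu + size sp - pv); rewrite subnKC ?cyc_nthDsize; last by move: pv_lt; clear; lia.
  by split=> //; move: pu_pv pv_lt; clear; lia.
pose arc := cyc_arc sp x0 pv.+1 L.
have arc_dpath : dpath_seq E M v arc u.
  have := dpath_cyc_arc x0 sp_cycle sp_uniq sp_gt0 pv.+1 L_gt0 L_lt sp_E.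
  by rewrite tl_cyc_nthS // addSnnS prednK // L_end -xv_eq -xu_eq xv_hd xu_hd.
exists [set x in qs ++ arc]; split.
  apply: (dcycle_cat qs_dpath arc_dpath) => w.
  rewrite (map_hd_dpath_seq qs_dpath) mem_rcons inE => /orP[/eqP -> | w_inner].
    by move: (dpath_seq_uniq arc_dpath); rewrite cons_uniq => /andP[].
  apply: contra (allP innerV w w_inner) => /mapP[x /cyc_arcP[k _ ->] ->].
  by rewrite hd_Vof // mem_Cp mem_cyc_nth.
split; apply/subsetP => x; rewrite ?Q_def !inE mem_cat; first by move=> ->.
by case/orP=> [-> | /cyc_arcP[k _ ->]]; rewrite ?orbT // mem_Cp mem_cyc_nth.
Qed.

Lemma CQP Q : is_jump E M Cp Ce Q ->
  [/\ is_dcycle E M (CQ E M Cp Q), Q \subset CQ E M Cp Q & CQ E M Cp Q \subset Cp :|: Q].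
Proof. by move=> /jump_closes_cycle /(epsilon_spec (inhabits set0)) [D_cycle [QD DCpQ]]. Qed.

Lemma exists_interjump_mem x : x \in Ce -> x \in Cp ->
  exists2 P, is_interjump E M Cp Ce P & x \in P.
Proof.
move=> xCe xCp; rewrite /is_interjump.
case: (boolP (Ce \subset Cp)) => _; first by exists Ce.
pose cand P := asbool (subpath E M Ce P /\ P \subset Cp /\ x \in P).
have cand_x : cand [set x].
  apply/asboolP; rewrite sub1set xCp inE eqxx; split=> //; split; first by rewrite sub1set.
  exists (tl M x), (hd M x), [:: x]; split; last by apply/setP => y; rewrite !inE.
  exists x, [::]; split=> //; split; first by rewrite /= andbT; apply: (allP se_E); rewrite -mem_Ce.
  by do 3 split=> //; rewrite /= inE andbT tl_neq_hd.
case: (@arg_maxnP _ [set x] cand (fun P => #|P|) cand_x) => P /asboolP[P_sub [PCp xP]] P_max.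
exists P => //; split=> //; split=> // P' P'_sub P'Cp PP'.
apply/esym/eqP; rewrite eqEcard PP' /=; apply: P_max; apply/asboolP; split=> //; split=> //.
exact: (subsetP PP').
Qed.

Lemma in_deg_sub_Cp (H : {set A * B}) x : H \subset Cp -> x \in Cp ->
  in_deg M H (hd M x) = ind (x \in H).
Proof.
move=> HCp xCp; apply: sum_ind_unique => [y yH /eqP | ]; last exact: eqxx.
by apply: Cp_hd_inj => //; apply: (subsetP HCp).
Qed.

Lemma out_deg_sub_Cp (H : {set A * B}) x : H \subset Cp -> x \in Cp ->
  out_deg M H (tl M x) = ind (x \in H).
Proof.
move=> HCp xCp; apply: sum_ind_unique => [y yH /eqP | ]; last exact: eqxx.
by apply: Cp_tl_inj => //; apply: (subsetP HCp).
Qed.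

Definition jumps : {set {set A * B}} := [set Q | asbool (is_jump E M Cp Ce Q)].

Lemma jumpsP Q : reflect (is_jump E M Cp Ce Q) (Q \in jumps).
Proof. by rewrite inE; apply: asboolP. Qed.

Lemma jump_disjoint Q : is_jump E M Cp Ce Q -> [disjoint Q & Cp].
Proof. by case=> _ [u [qs [v [_ [_ [_ [_ [_ ->]]]]]]]]. Qed.

Lemma trivIset_jumps : trivIset jumps.
Proof.
apply/trivIsetP => Q1 Q2 /jumpsP Q1_jump /jumpsP Q2_jump Q_neq.
rewrite -setI_eq0; apply/negPn/negP => /set0Pn[y /setIP[y1 y2]].
by case/eqP: Q_neq; apply: jump_eq Q1_jump Q2_jump y1 y2.
Qed.

Section Coverage.
Variables (R : {set A * B}) (e : A * B).
Hypotheses (e_Cp : e \in Cp) (e_Ce : e \in Ce).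

Lemma cover_jumps : cover jumps = Ce :\: Cp.
Proof.
apply/setP => y; rewrite in_setD; apply/bigcupP/andP => [[Q /jumpsP Q_jump yQ] | [yCp yCe]].
  by case: (Q_jump) => QCe _; rewrite (disjointFr (jump_disjoint Q_jump) yQ) (subsetP QCe).
have [z zCe zCp] : exists2 z, z \in Ce & z \in Cp by exists e.
have [Q Q_jump yQ] := exists_jump_mem zCe zCp yCe yCp.
by exists Q => //; apply/jumpsP.
Qed.

Lemma reach_forward Q : forward E R M Cp Q -> reach E R M Cp Q = Cp :\: CQ E M Cp Q.
Proof. by rewrite /reach /forward => ->. Qed.

Lemma reach_backward Q : ~ forward E R M Cp Q -> reach E R M Cp Q = CQ E M Cp Q :\: Q.
Proof. by rewrite /reach /forward => /negP/negbTE ->. Qed.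

Definition coverage Q x : int :=
  if (0 < wM R M (CQ E M Cp Q))%R then ind (x \notin CQ E M Cp Q)
  else (- ind (x \in CQ E M Cp Q))%R.

Definition total_coverage x : int := (ind (x \in Ce) + \sum_(Q in jumps) coverage Q x)%R.

Lemma coverage_step Q x z : Q \in jumps -> x \in Cp -> z \in Cp -> hd M x = tl M z ->
  (coverage Q x - coverage Q z = in_deg M Q (hd M x) - out_deg M Q (hd M x))%R.
Proof.
move=> /jumpsP Q_jump xCp zCp xz.
have [[s [s_nil [D_def [_ [s_cycle s_uniq]]]]] QD DCpQ] := CQP Q_jump.
set D := CQ E M Cp Q in D_def QD DCpQ *.
have s_gt0 : 0 < size s by rewrite lt0n size_eq0.
(* C_Q \ Q runs along C^+, so at hd x its only entering and leaving edges are x and z. *)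
have DQ_Cp : D :\: Q \subset Cp.
  by apply/subsetP => y /setDP[yD yQ]; move: (subsetP DCpQ y yD); rewrite in_setU (negbTE yQ) orbF.
have in_DQ : in_deg M (D :\: Q) (hd M x) = ind (x \in D).
  by rewrite in_deg_sub_Cp // in_setD (disjointFl (jump_disjoint Q_jump) xCp).
have out_DQ : out_deg M (D :\: Q) (hd M x) = ind (z \in D).
  by rewrite xz out_deg_sub_Cp // in_setD (disjointFl (jump_disjoint Q_jump) zCp).
have := cycle_deg_balance x0 s_cycle s_uniq s_gt0 (hd M x).
rewrite -D_def (in_deg_setID _ _ Q) (out_deg_setID _ _ Q) (setIidPr QD) in_DQ out_DQ.
by rewrite /coverage -/D; case: ifP => _; rewrite ?ind_negb; clear; lia.
Qed.

Lemma total_coverage_step x z : x \in Cp -> z \in Cp -> hd M x = tl M z ->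
  total_coverage x = total_coverage z.
Proof.
move=> xCp zCp xz.
have in_on : in_deg M (Ce :&: Cp) (hd M x) = ind (x \in Ce).
  by rewrite in_deg_sub_Cp ?subsetIr // in_setI xCp andbT.
have out_on : out_deg M (Ce :&: Cp) (hd M x) = ind (z \in Ce).
  by rewrite xz out_deg_sub_Cp ?subsetIr // in_setI zCp andbT.
have sum_step : (\sum_(Q in jumps) coverage Q x - \sum_(Q in jumps) coverage Q z =
    \sum_(Q in jumps) in_deg M Q (hd M x) - \sum_(Q in jumps) out_deg M Q (hd M x))%R.
  by rewrite -!sumrB; apply: eq_bigr => Q Qj; apply: coverage_step.
have := cycle_deg_balance x0 se_cycle se_uniq se_gt0 (hd M x).
rewrite -Ce_def (in_deg_setID _ _ Cp) (out_deg_setID _ _ Cp) -cover_jumps in_on out_on.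
rewrite in_deg_cover ?out_deg_cover ?trivIset_jumps //.
by rewrite /total_coverage; move: sum_step; clear; lia.
Qed.

Lemma total_coverage_const x : x \in Cp -> total_coverage x = total_coverage e.
Proof.
rewrite mem_Cp => x_sp; apply/eqP; move: x x_sp.
apply: (cycle_step_closed x0 sp_cycle sp_gt0 (y := e)); rewrite -?mem_Cp //.
move=> y y' y_sp y'_sp /eqP <- /eqP yy'.
by apply/eqP/esym/total_coverage_step; rewrite ?mem_Cp.
Qed.

Hypothesis e_not_backward_reach :
  ~ (exists Q, is_jump E M Cp Ce Q /\ ~ forward E R M Cp Q /\ e \in reach E R M Cp Q).

Lemma coverage_e_ge0 Q : Q \in jumps -> (0 <= coverage Q e)%R.
Proof.
move=> /jumpsP Q_jump; rewrite /coverage; case: ifP => Q_fwd; first exact: ind_ge0.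
case: (boolP (e \in CQ E M Cp Q)) => e_CQ; last by rewrite oppr0.
case: e_not_backward_reach; exists Q; split=> //; split; first by rewrite /forward Q_fwd.
rewrite reach_backward ?in_setD ?e_CQ ?(disjointFl (jump_disjoint Q_jump) e_Cp) //.
by rewrite /forward Q_fwd.
Qed.

Lemma exists_forward_reach x : x \in Cp -> x \notin Ce ->
  exists Q, [/\ Q \in jumps, forward E R M Cp Q,
             x \in reach E R M Cp Q & e \notin reach E R M Cp Q].
Proof.
move=> xCp xCe; have := total_coverage_const xCp.
rewrite /total_coverage (negbTE xCe) e_Ce /ind add0r => coverage_sum.
have [Q Qj cov_lt] : exists2 Q, Q \in jumps & (coverage Q e < coverage Q x)%R.
  case: (boolP [exists Q in jumps, coverage Q e < coverage Q x]%R) => [/exists_inP // |].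
  move=> /exists_inPn no_Q.
  suff : (\sum_(Q in jumps) coverage Q x <= \sum_(Q in jumps) coverage Q e)%R.
    by rewrite coverage_sum => sum_le; exfalso; move: sum_le; clear; lia.
  by apply: ler_sum => Q Qj; rewrite leNgt no_Q.
move: cov_lt (coverage_e_ge0 Qj); rewrite /coverage; case: ifP => Q_fwd cov_lt cov_ge0.
  have Q_forward : forward E R M Cp Q by rewrite /forward Q_fwd.
  exists Q; rewrite reach_forward // !in_setD xCp e_Cp !andbT.
  by split=> //; move: cov_lt; case: (x \in _); case: (e \in _).
by move: cov_lt cov_ge0; case: (x \in _); case: (e \in _).
Qed.

Lemma Cp_cover_reaches_interjumps :
  exists QQ : {set {set A * B}},
    (forall Q, Q \in QQ -> is_jump E M Cp Ce Q /\ forward E R M Cp Q) /\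
    (forall x, x \in Cp <->
       ((exists2 Q, Q \in QQ & x \in reach E R M Cp Q) \/
        (exists2 P, is_interjump E M Cp Ce P & x \in P))) /\
    (forall Q, Q \in QQ -> e \notin reach E R M Cp Q).
Proof.
exists [set Q in jumps | (0 < wM R M (CQ E M Cp Q))%R && (e \notin reach E R M Cp Q)].
split; first by move=> Q; rewrite in_set => /and3P[/jumpsP].
split; last by move=> Q; rewrite in_set => /and3P[].
move=> x; split=> [xCp | [[Q] | [P P_ij xP]]]; last 2 first.
- by rewrite in_set => /and3P[_ Q_fwd _]; rewrite reach_forward // => /setDP[].
- move: P_ij; rewrite /is_interjump; case: ifP => [CeCp P_eq | _ [_ [PCp _]]].
    by apply: (subsetP CeCp); rewrite -P_eq.
  exact: (subsetP PCp).
case: (boolP (x \in Ce)) => xCe; first by right; apply: exists_interjump_mem.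
have [Q [Qj Q_fwd x_reach e_reach]] := exists_forward_reach xCp xCe.
by left; exists Q; rewrite // in_set Qj Q_fwd.
Qed.

End Coverage.

End Jumps.

Theorem lemma6 (A B : finType) (E R : {set A * B}) (k : nat)
    (Ms M : {set A * B}) (Me : A * B -> {set A * B}) (Cp Ce : {set A * B})
    (e : A * B) :
  R \subset E ->
  is_Me E R Me ->
  critical E R k Ms M Me ->
  (* C^+ : the positive-weight directed cycle of G_M contained in M Δ M* *)
  is_dcycle E M Cp -> Cp \subset symdiff M Ms -> (0 < wM R M Cp)%R ->
  e \in Eplus R M Cp ->
  (* C_e : the directed cycle of G_M in M Δ M^e containing e *)
  is_dcycle E M Ce -> Ce \subset symdiff M (Me e) -> e \in Ce ->
  (* e is not in r_b(C_e) *)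
  ~ (exists Q, is_jump E M Cp Ce Q /\ ~ forward E R M Cp Q /\ e \in reach E R M Cp Q) ->
  exists QQ : {set {set A * B}},
    (forall Q, Q \in QQ -> is_jump E M Cp Ce Q /\ forward E R M Cp Q) /\
    (forall x, x \in Cp <->
       ((exists2 Q, Q \in QQ & x \in reach E R M Cp Q) \/
        (exists2 P, is_interjump E M Cp Ce P & x \in P))) /\
    (forall Q, Q \in QQ -> e \notin reach E R M Cp Q).
Proof.
move=> _ _ _ [sp [sp_nil [Cp_def [sp_E [sp_cycle sp_uniq]]]]] _ _ e_plus.
move=> [se [se_nil [Ce_def [se_E [se_cycle se_uniq]]]]] _ e_Ce no_backward.
have e_Cp : e \in Cp by move: e_plus; rewrite inE => /andP[].
have sp_gt0 : 0 < size sp by rewrite lt0n size_eq0.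
have se_gt0 : 0 < size se by rewrite lt0n size_eq0.
exact: (Cp_cover_reaches_interjumps e Cp_def sp_E sp_cycle sp_uniq sp_gt0
          Ce_def se_E se_cycle se_uniq se_gt0 e_Cp e_Ce no_backward).
Qed.
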